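(* For every $N\ge1$ and every pair of disjoint nonempty subsets $\mathscr A,\mathscr B$ of $E_N$, $$\mathrm{Cap}^s_N(\mathscr A,\mathscr B)\le\mathrm{Cap}_N(\mathscr A,\mathscr B)\le 4L^2\,\mathrm{Cap}^s_N(\mathscr A,\mathscr B).$$
   Context: Fix an integer $L\ge2$, $\mathbb T_L=\mathbb Z/L\mathbb Z$, $\alpha>0$, $a(0)=1$, $a(n)=n^\alpha$ ($n\ge1$), $g(0)=0$, $g(n)=a(n)/a(n-1)$ ($n\ge1$). $E_N=\{\eta\in\{0,1,\dots\}^{\mathbb T_L}:\sum_x\eta_x=N\}$; $\sigma^{x,y}\eta$ moves one particle from $x$ to $y$. Generator $(\mathcal LF)(\eta)=\sum_xg(\eta_x)[F(\sigma^{x,x+1}\eta)-F(\eta)]$; invariant measure $\mu_N(\eta)=W_N^{-1}\prod_xa(\eta_x)^{-1}$, $W_N=\sum_{\zeta\in E_N}\prod_xa(\zeta_x)^{-1}$. Dirichlet form $D_N(F)=\frac12\sum_x\sum_{\eta\in E_N}\mu_N(\eta)g(\eta_x)[F(\sigma^{x,x+1}\eta)-F(\eta)]^2$. For disjoint nonempty $\mathscr A,\mathscr B\subset E_N$: $V_{\mathscr A,\mathscr B}$ is the function equal to $1$ on $\mathscr A$, $0$ on $\mathscr B$, and $V(\eta)=\mathbf P_\eta[H_{\mathscr A}<H_{\mathscr B}]$ elsewhere (the unique function with these boundary values with $\mathcal LV=0$ off $\mathscr A\cup\mathscr B$); $\mathrm{Cap}_N(\mathscr A,\mathscr B)=D_N(V_{\mathscr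 A,\mathscr B})$. The symmetric capacity is $\mathrm{Cap}^s_N(\mathscr A,\mathscr B)=\inf\{D_N(F):F|_{\mathscr A}=1,\ F|_{\mathscr B}=0\}$ (capacity of the reversible process with generator $(\mathcal L+\mathcal L^* )/2$, $\mathcal L^*$ the $L^2(\mu_N)$-adjoint of $\mathcal L$). *)

From mathcomp Require Import all_boot.
From Stdlib Require Import Reals.

Set Implicit Arguments.
Unset Strict Implicit.
Unset Printing Implicit Defensive.

(* Configurations on T_L = 'I_L with at most N particles per site; the
   state space E_N is the subset with total particle number N. *)
Definition cfg (L N : nat) : finType := {ffun 'I_L -> 'I_N.+1}.

Definition inEN (L N : nat) (eta : cfg L N) : bool :=
  (\sum_(x < L) (eta x : nat) == N)%N.

Definition Rsum (T : finType) (P : pred T) (F : T -> R) : R :=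
  \big[Rplus/0%R]_(t | P t) F t.

Definition succ (L : nat) (x : 'I_L) : 'I_L := ordS x.

(* sigma^{x,y} eta : move one particle from x to y (identity if eta_x = 0,
   a case that never contributes since g(0) = 0) *)
Definition sigma (L N : nat) (x y : 'I_L) (eta : cfg L N) : cfg L N :=
  if (eta x : nat) == 0%N then eta
  else [ffun z => inord (((eta z : nat) - (z == x)) + (z == y))%N].

Definition a (alpha : R) (n : nat) : R :=
  match n with O => 1%R | _ => Rpower (INR n) alpha end.

Definition g (alpha : R) (n : nat) : R :=
  match n with O => 0%R | S m => (a alpha n / a alpha m)%R end.

Definition weight (L N : nat) (alpha : R) (eta : cfg L N) : R :=
  (/ \big[Rmult/1%R]_(x < L) a alpha (eta x))%R.

Definition WN (L N : nat) (alpha : R) : R :=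
  Rsum (@inEN L N) (weight alpha).

Definition mu (L N : nat) (alpha : R) (eta : cfg L N) : R :=
  (weight alpha eta / WN L N alpha)%R.

Definition gen (L N : nat) (alpha : R) (F : cfg L N -> R) (eta : cfg L N) : R :=
  Rsum (fun _ : 'I_L => true)
    (fun x => (g alpha (eta x) * (F (sigma x (succ x) eta) - F eta))%R).

Definition Dir (L N : nat) (alpha : R) (F : cfg L N -> R) : R :=
  (/ 2 * Rsum (fun _ : 'I_L => true) (fun x =>
      Rsum (@inEN L N) (fun eta =>
        mu alpha eta * g alpha (eta x) * (F (sigma x (succ x) eta) - F eta) ^ 2)))%R.

Definition eq_potential (L N : nat) (alpha : R) (A B : {set cfg L N})
    (V : cfg L N -> R) : Prop :=
  (forall eta, eta \in A -> V eta = 1%R) /\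
  (forall eta, eta \in B -> V eta = 0%R) /\
  (forall eta, inEN eta -> eta \notin A -> eta \notin B -> gen alpha V eta = 0%R).

Definition is_Cap (L N : nat) (alpha : R) (A B : {set cfg L N}) (c : R) : Prop :=
  exists V, eq_potential alpha A B V /\ c = Dir alpha V.

Definition is_inf (S : R -> Prop) (c : R) : Prop :=
  (forall x, S x -> (c <= x)%R) /\
  (forall c', (forall x, S x -> (c' <= x)%R) -> (c' <= c)%R).

Definition is_Caps (L N : nat) (alpha : R) (A B : {set cfg L N}) (c : R) : Prop :=
  is_inf (fun d => exists F : cfg L N -> R,
            (forall eta, eta \in A -> F eta = 1%R) /\
            (forall eta, eta \in B -> F eta = 0%R) /\
            d = Dir alpha F) c.

(* Call an edge a pair e = (x, eta) with eta in E_N and eta_x > 0; it stands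
   for the jump eta -> sigma^{x,x+1} eta, with conductance
   c(e) = mu_N(eta) g(eta_x).  The rotation rot (x, eta) = (x+1, sigma^{x,x+1} eta),
   which follows the jumped particle, is a bijection of edges with
   rot^L = id, and it preserves conductances (this is stationarity of mu_N).
   Hence edge sums are rotation invariant.  This gives D(f) = -<L f, f>_mu,
   and, summing the increments of f and h along rotation orbits (where the
   increments of f cancel) and applying Young's inequality, the sector
   inequality  -<L f, h>_mu <= L (t D(f) + D(h) / t)  for all t > 0.
   If V is the equilibrium potential and F has the same boundary values,
   <L V, F - V>_mu = 0, so D(V) = -<L V, F>_mu and t = 1/(2L) yields
   D(V) <= 4 L^2 D(F); taking F = V gives Cap^s <= Cap.
   The equilibrium potential exists because the linear operator of the
   Dirichlet problem is injective: a solution of the homogeneous problem has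
   zero Dirichlet form, hence is constant on the connected space E_N, hence
   vanishes. *)

From Pilot Require Import Defs.
From mathcomp Require Import all_boot all_algebra.
From mathcomp Require Import Rstruct.
From mathcomp Require Import zify.
From Stdlib Require Import Reals Lra.

Set Implicit Arguments.
Unset Strict Implicit.
Unset Printing Implicit Defensive.

(* [lia] after exposing the bound [i < n] of every ordinal [i : 'I_n]
   occurring in the goal, which zify does not know by itself. *)
Ltac ord_lia :=
  repeat match goal with H : context [@nat_of_ord _ _] |- _ => revert H end;
  repeat match goal with
  | |- context [@nat_of_ord ?n ?t] =>
      let k := fresh "k" in
      have := ltn_ord t; set k := (@nat_of_ord n t); clearbody k
  end; lia.

Section ParticleMoves.
Variables (L N : nat).
Implicit Types (eta : cfg L N) (x y z w : 'I_L).

Lemma two_sites_le_total eta x z :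
  z != x -> (eta z + eta x <= \sum_(v < L) (eta v : nat))%N.
Proof. by move=> zx; rewrite (bigD1 x) //= (bigD1 z) //=; ord_lia. Qed.

(* On E_N the truncation in the definition of sigma is never active:
   sigma^{x,y} removes one particle at x and adds one at y. *)
Lemma sigmaE eta x y : inEN eta -> (eta x : nat) != 0%N -> forall z,
  (Defs.sigma x y eta z : nat) = (eta z - (z == x) + (z == y))%N.
Proof.
move=> /eqP hs hx z; rewrite /Defs.sigma (negbTE hx) ffunE inordK //.
case: (eqVneq z y) => [->|zy]; last by rewrite /=; ord_lia.
case: (eqVneq y x) => [->|yx]; first by rewrite /=; ord_lia.
by have := two_sites_le_total eta yx; rewrite hs; ord_lia.
Qed.

Lemma sigma_inEN eta x y :
  inEN eta -> (eta x : nat) != 0%N -> inEN (Defs.sigma x y eta).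
Proof.
move=> he hx; rewrite /inEN (eq_bigr _ (fun z _ => sigmaE y he hx z)).
have one_target : (\sum_(z < L) (z == y) = 1)%N.
  by rewrite (bigD1 y) //= eqxx big1 // => z /negbTE ->.
rewrite big_split /= one_target (bigD1 x) //= eqxx.
rewrite (eq_bigr (fun z => eta z : nat)) => [|z /negbTE ->]; last by rewrite subn0.
by move: he; rewrite /inEN (bigD1 x) //=; ord_lia.
Qed.

Lemma sigma_target_nz eta x y :
  inEN eta -> (eta x : nat) != 0%N -> (Defs.sigma x y eta y : nat) != 0%N.
Proof. by move=> he hx; rewrite sigmaE // eqxx; ord_lia. Qed.

Lemma sigma_comp eta x y w : inEN eta -> (eta x : nat) != 0%N ->
  Defs.sigma y w (Defs.sigma x y eta) = Defs.sigma x w eta.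
Proof.
move=> he hx; apply/ffunP => z; apply: val_inj => /=.
rewrite sigmaE ?sigma_inEN ?sigma_target_nz // !sigmaE //.
by case: (z == y); rewrite ?addnK.
Qed.

Lemma sigma_id eta x : inEN eta -> Defs.sigma x x eta = eta.
Proof.
move=> he; case: (eqVneq (eta x : nat) 0%N) => hx; first by rewrite /Defs.sigma hx.
apply/ffunP => z; apply: val_inj => /=; rewrite sigmaE //.
by case: (eqVneq z x) => [->|]; rewrite /=; ord_lia.
Qed.

End ParticleMoves.

Section Rotation.
Variables (L N : nat).
Implicit Types (eta : cfg L N) (x : 'I_L).

Lemma succ_neq x : (1 < L)%N -> succ x != x.
Proof.
move=> hL; apply/eqP => /(congr1 val) /=; case: (ltnP x.+1 L) => h.
  by rewrite modn_small //; ord_lia.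
have -> : x.+1 = L by ord_lia.
by rewrite modnn; ord_lia.
Qed.

Lemma iter_succ k x : (val (iter k (@succ L) x) = (x + k) %% L)%N.
Proof.
elim: k => [|k IH] /=; first by rewrite addn0 modn_small.
by rewrite IH -addn1 modnDml addn1 addnS.
Qed.

Lemma iter_succ_period x : iter L (@succ L) x = x.
Proof. by apply: val_inj; rewrite iter_succ modnDr modn_small. Qed.

(* An edge (x, eta) is a configuration of E_N together with an occupied
   site x; it stands for the jump eta -> sigma^{x,x+1} eta.  The rotation
   follows the jumped particle: it is sent to the edge of its next jump. *)
Definition is_edge (e : 'I_L * cfg L N) : bool :=
  inEN e.2 && ((e.2 e.1 : nat) != 0%N).

Definition rot (e : 'I_L * cfg L N) : 'I_L * cfg L N :=
  (succ e.1, Defs.sigma e.1 (succ e.1) e.2).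

Definition rot_inv (e : 'I_L * cfg L N) : 'I_L * cfg L N :=
  (ord_pred e.1, Defs.sigma e.1 (ord_pred e.1) e.2).

Lemma rot_edge e : is_edge e -> is_edge (rot e).
Proof. by case/andP => he hx; rewrite /is_edge sigma_inEN // sigma_target_nz. Qed.

Lemma rot_inv_edge e : is_edge e -> is_edge (rot_inv e).
Proof. by case/andP => he hx; rewrite /is_edge sigma_inEN // sigma_target_nz. Qed.

Lemma rotK e : is_edge e -> rot_inv (rot e) = e.
Proof.
case: e => x eta /andP [/= he hx].
by rewrite /rot_inv /rot /= /succ ordSK sigma_comp // sigma_id.
Qed.

Lemma rot_invK e : is_edge e -> rot (rot_inv e) = e.
Proof.
case: e => x eta /andP [/= he hx].
by rewrite /rot_inv /rot /= /succ ord_predK sigma_comp // sigma_id.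
Qed.

Lemma iter_rot k e : is_edge e ->
  iter k rot e = (iter k (@succ L) e.1, Defs.sigma e.1 (iter k (@succ L) e.1) e.2).
Proof.
case: e => x eta /andP [/= he hx]; elim: k => [|k IH] /=; first by rewrite sigma_id.
by rewrite IH /rot /= sigma_comp.
Qed.

Lemma iter_rot_period e : is_edge e -> iter L rot e = e.
Proof.
move=> he; rewrite iter_rot // iter_succ_period.
by case: e he => x eta /andP [/= he _]; rewrite sigma_id.
Qed.

End Rotation.

Section RealSums.
Local Open Scope R_scope.

Lemma sumR_le (I : Type) (r : seq I) (P : pred I) (F G : I -> R) :
  (forall i, P i -> F i <= G i) ->
  \big[Rplus/0]_(i <- r | P i) F i <= \big[Rplus/0]_(i <- r | P i) G i.
Proof. by move=> h; apply: (big_ind2 Rle); [lra | move=> *; lra | exact: h]. Qed.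

Lemma sumR_ge0 (I : Type) (r : seq I) (P : pred I) (F : I -> R) :
  (forall i, P i -> 0 <= F i) -> 0 <= \big[Rplus/0]_(i <- r | P i) F i.
Proof. by move=> h; apply: (big_ind (Rle 0)); [lra | move=> *; lra | exact: h]. Qed.

Lemma sumR_eq0 (I : finType) (P : pred I) (F : I -> R) :
  (forall i, P i -> 0 <= F i) -> \big[Rplus/0]_(i | P i) F i = 0 ->
  forall i, P i -> F i = 0.
Proof.
move=> h0 hs i hi; move: hs; rewrite (bigD1 i) //=; set rest := bigop _ _ _.
have : 0 <= rest by apply: sumR_ge0 => j /andP [hj _]; exact: h0.
by have := h0 i hi; lra.
Qed.

Lemma sumR_const_nat (n : nat) (x : R) : \big[Rplus/0]_(0 <= k < n) x = INR n * x.
Proof.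
elim: n => [|n IH]; first by rewrite big_geq //=; ring.
by rewrite S_INR big_nat_recr //= IH; ring.
Qed.

Lemma telescopeR (u : nat -> R) (n : nat) :
  \big[Rplus/0]_(0 <= k < n) (u k.+1 - u k) = u n - u O.
Proof.
elim: n => [|n IH]; first by rewrite big_geq //; ring.
by rewrite big_nat_recr //= IH; ring.
Qed.

Lemma young (a b t : R) : 0 < t -> - (a * b) <= t / 2 * a ^ 2 + / (2 * t) * b ^ 2.
Proof.
move=> ht; have : 0 <= (t * a + b) ^ 2 / t.
  by apply: Rmult_le_pos; [apply: pow2_ge_0 | apply/Rlt_le/Rinv_0_lt_compat].
have -> : (t * a + b) ^ 2 / t = 2 * (t / 2 * a ^ 2 + / (2 * t) * b ^ 2) + 2 * (a * b)
  by field; lra.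
lra.
Qed.

Lemma triangular_young (a b : nat -> R) (n : nat) (t : R) : 0 < t ->
  - (\big[Rplus/0]_(0 <= k < n) (a k * \big[Rplus/0]_(0 <= j < k) b j))
  <= (INR n * t * \big[Rplus/0]_(0 <= k < n) a k ^ 2
      + INR n / t * \big[Rplus/0]_(0 <= j < n) b j ^ 2) / 2.
Proof.
move=> ht; pose Q k j := t / 2 * a k ^ 2 + / (2 * t) * b j ^ 2.
have Q_ge0 k j : 0 <= Q k j.
  have : 0 < / (2 * t) by apply: Rinv_0_lt_compat; lra.
  by have := pow2_ge_0 (a k); have := pow2_ge_0 (b j); rewrite /Q; nra.
have row_bound (k : nat) : (k < n)%nat ->
    - (a k * \big[Rplus/0]_(0 <= j < k) b j) <= \big[Rplus/0]_(0 <= j < n) Q k j.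
  move=> hk; rewrite big_distrr (big_morph Ropp Ropp_plus_distr Ropp_0) /=.
  rewrite (@big_cat_nat _ _ _ k 0 n) /= ?(ltnW hk) //.
  have : 0 <= \big[Rplus/0]_(k <= j < n) Q k j by apply: sumR_ge0.
  have : \big[Rplus/0]_(0 <= j < k) - (a k * b j) <= \big[Rplus/0]_(0 <= j < k) Q k j.
    by apply: sumR_le => j _; apply: young.
  lra.
have -> : (INR n * t * \big[Rplus/0]_(0 <= k < n) a k ^ 2 +
   INR n / t * \big[Rplus/0]_(0 <= j < n) b j ^ 2) / 2 =
   \big[Rplus/0]_(0 <= k < n) \big[Rplus/0]_(0 <= j < n) Q k j.
  under [RHS]eq_bigr => k _ do rewrite big_split /= sumR_const_nat -big_distrr.
  rewrite big_split /= sumR_const_nat -!big_distrr /=; field; lra.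
rewrite (big_morph Ropp Ropp_plus_distr Ropp_0) big_nat_cond [X in _ <= X]big_nat_cond.
by apply: sumR_le => k /andP [/andP [_ hk] _]; apply: row_bound.
Qed.

End RealSums.

Section Weights.
Variables (L N : nat) (alpha : R).
Implicit Types (eta : cfg L N) (x : 'I_L).
Local Open Scope R_scope.

Lemma a_pos (n : nat) : 0 < a alpha n.
Proof. by case: n => [|n] /=; [lra | apply: exp_pos]. Qed.

Lemma gS (n : nat) : g alpha n.+1 = a alpha n.+1 / a alpha n.
Proof. by []. Qed.

Lemma g_ge0 (n : nat) : 0 <= g alpha n.
Proof.
case: n => [|n]; first by rewrite /=; lra.
exact/Rlt_le/(Rdiv_lt_0_compat _ _ (a_pos _) (a_pos _)).
Qed.

Lemma g_pos (n : nat) : n != O -> 0 < g alpha n.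
Proof. by case: n => [|n] // _; exact: (Rdiv_lt_0_compat _ _ (a_pos _) (a_pos _)). Qed.

Lemma prod_a_pos (P : pred 'I_L) eta : 0 < \big[Rmult/1]_(x | P x) a alpha (eta x).
Proof. by apply: (big_ind (Rlt 0)); [lra | move=> *; nra | move=> *; apply: a_pos]. Qed.

Lemma weight_pos eta : 0 < weight alpha eta.
Proof. exact/Rinv_0_lt_compat/prod_a_pos. Qed.

Lemma WN_pos eta : inEN eta -> 0 < WN L N alpha.
Proof.
move=> he; rewrite /WN /Rsum (bigD1 eta) //=.
apply: Rplus_lt_le_0_compat; first exact: weight_pos.
by apply: sumR_ge0 => *; apply/Rlt_le/weight_pos.
Qed.

(* Stationarity along a jump: pi(eta) g(eta_x) = pi(eta') g(eta'_{x+1}) for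
   eta' = sigma^{x,x+1} eta, since g(n) = a(n)/a(n-1) makes both sides equal
   to the product of the 1/a(eta_z), z <> x, x+1, times 1/(a(eta_x - 1) a(eta_{x+1})). *)
Lemma weight_jump eta x : (1 < L)%nat -> inEN eta -> (eta x : nat) != 0%nat ->
  weight alpha (Defs.sigma x (succ x) eta) * g alpha (Defs.sigma x (succ x) eta (succ x))
  = weight alpha eta * g alpha (eta x).
Proof.
move=> hL he hx; have ny := succ_neq x hL.
rewrite /weight (bigD1 x) //= [in RHS](bigD1 x) //= (bigD1 (succ x)) //=.
rewrite [in RHS](bigD1 (succ x)) //= (eq_bigr (fun z => a alpha (eta z))); last first.
  move=> z /andP [zx zy]; congr (a alpha _).
  by rewrite sigmaE // (negbTE zx) (negbTE zy) /= subn0 addn0.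
rewrite !sigmaE // !eqxx (negbTE ny) eq_sym (negbTE ny) /= subn0 addn0 addn1.
set Q := \big[Rmult/1]_(i < L | _) _; have hQ : 0 < Q := prod_a_pos _ _.
move: hx; case: (eta x : nat) => [|m] // _; rewrite subn1 succnK !gS.
have := a_pos m; have := a_pos m.+1.
have := a_pos (eta (succ x)); have := a_pos (eta (succ x)).+1.
by move=> *; field; repeat split; apply: Rgt_not_eq.
Qed.

End Weights.

Section EdgeSums.
Variables (L N : nat) (alpha : R).
Hypothesis hL : (1 < L)%nat.
Hypothesis hWN : (0 < WN L N alpha)%R.
Local Open Scope R_scope.

Notation E := (cfg L N).
Notation edge := ('I_L * cfg L N)%type.
Notation is_edge := (@is_edge L N).
Notation rot := (@rot L N).

Definition cond (e : edge) : R := mu alpha e.2 * g alpha (e.2 e.1).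

Definition edge_sum (F : edge -> R) : R :=
  \big[Rplus/0]_(e | is_edge e) (cond e * F e).

Definition grad (f : E -> R) (e : edge) : R := f (rot e).2 - f e.2.

(* pairing f h = <L f, h>_mu, written as an edge sum (see gen_pairing). *)
Definition pairing (f h : E -> R) : R := edge_sum (fun e => grad f e * h e.2).

Lemma mu_pos (eta : E) : 0 < mu alpha eta.
Proof. exact/Rmult_lt_0_compat/Rinv_0_lt_compat/hWN/weight_pos. Qed.

Lemma cond_ge0 (e : edge) : 0 <= cond e.
Proof. exact/Rmult_le_pos/g_ge0/Rlt_le/mu_pos. Qed.

Lemma cond_pos (e : edge) : is_edge e -> 0 < cond e.
Proof. by case/andP => _ hx; apply/Rmult_lt_0_compat/g_pos/hx/mu_pos. Qed.

(* The rotation preserves conductances: this is stationarity (weight_jump). *)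
Lemma cond_rot (e : edge) : is_edge e -> cond (rot e) = cond e.
Proof.
case: e => x eta /andP [/= he hx]; rewrite /cond /= /mu /Rdiv.
rewrite Rmult_assoc (Rmult_comm (/ _)) -Rmult_assoc weight_jump //.
by rewrite [RHS]Rmult_assoc [X in _ = _ * X]Rmult_comm -[RHS]Rmult_assoc.
Qed.

Lemma edge_sum_rot (F : edge -> R) : edge_sum (fun e => F (rot e)) = edge_sum F.
Proof.
rewrite /edge_sum [RHS](reindex_onto rot (@rot_inv L N)); last first.
  by move=> e he; apply: rot_invK.
apply: eq_big => [e | e he]; last by rewrite cond_rot.
apply/idP/idP => [he | /andP [he /eqP <-]]; last exact: rot_inv_edge.
by rewrite rot_edge //= rotK.
Qed.

Lemma edge_sum_iter_rot k (F : edge -> R) :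
  edge_sum (fun e => F (iter k rot e)) = edge_sum F.
Proof.
elim: k F => [|k IH] F //; rewrite -(IH F) -(edge_sum_rot (fun e => F (iter k rot e))).
by apply: eq_bigr => e _; rewrite iterSr.
Qed.

Lemma edge_sum_add (F G : edge -> R) :
  edge_sum (fun e => F e + G e) = edge_sum F + edge_sum G.
Proof. by rewrite /edge_sum -big_split /=; apply: eq_bigr => e _; ring. Qed.

Lemma edge_sum_scale k (F : edge -> R) : edge_sum (fun e => k * F e) = k * edge_sum F.
Proof. by rewrite /edge_sum big_distrr /=; apply: eq_bigr => e _; ring. Qed.

Lemma edge_sum_ext (F G : edge -> R) :
  (forall e, is_edge e -> F e = G e) -> edge_sum F = edge_sum G.
Proof. by move=> h; apply: eq_bigr => e he; rewrite h. Qed.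

Lemma edge_sum_le (F G : edge -> R) :
  (forall e, is_edge e -> F e <= G e) -> edge_sum F <= edge_sum G.
Proof.
move=> h; apply: sumR_le => e he.
by have := cond_ge0 e; have := h e he; nra.
Qed.

Lemma edge_sum_nat (n : nat) (F : nat -> edge -> R) :
  edge_sum (fun e => \big[Rplus/0]_(0 <= k < n) F k e)
  = \big[Rplus/0]_(0 <= k < n) edge_sum (F k).
Proof. by rewrite /edge_sum exchange_big; apply: eq_bigr => e _; rewrite big_distrr. Qed.

Lemma sum_sites_configs (F : 'I_L -> E -> R) :
  (forall x (eta : E), (eta x : nat) = 0%nat -> F x eta = 0) ->
  \big[Rplus/0]_(x < L) \big[Rplus/0]_(eta | inEN eta) F x eta
  = \big[Rplus/0]_(e | is_edge e) F e.1 e.2.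
Proof.
move=> h0; rewrite pair_big_dep /= (bigID (fun e : edge => (e.2 e.1 : nat) != 0%nat)) /=.
rewrite [X in _ + X = _]big1 ?Rplus_0_r; last by move=> e /andP [_ /negbNE /eqP]; apply: h0.
by apply: eq_bigl.
Qed.

Lemma Dir_edge_sum (f : E -> R) : Dir alpha f = / 2 * edge_sum (fun e => grad f e ^ 2).
Proof.
rewrite /Dir /Rsum sum_sites_configs; last by move=> x eta ->; rewrite /=; ring.
by congr (_ * _); apply: eq_bigr => e _; rewrite /cond /grad /=; ring.
Qed.

Lemma gen_pairing (f h : E -> R) :
  \big[Rplus/0]_(eta | inEN eta) (mu alpha eta * gen alpha f eta * h eta) = pairing f h.
Proof.
pose G x eta := cond (x, eta) * (grad f (x, eta) * h eta).
rewrite /pairing /edge_sum (eq_bigr (fun e => G e.1 e.2)); last by case.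
rewrite -sum_sites_configs; last by move=> x eta hx; rewrite /G /cond /= hx /=; ring.
rewrite exchange_big; apply: eq_bigr => eta _.
rewrite /gen /Rsum big_distrr big_distrl; apply: eq_bigr => x _.
by rewrite /G /cond /grad /=; ring.
Qed.

(* Rotation invariance turns D(f) into -<L f, f>_mu. *)
Lemma Dir_pairing (f : E -> R) : Dir alpha f = - pairing f f.
Proof.
rewrite Dir_edge_sum.
have -> : edge_sum (fun e => grad f e ^ 2) =
   edge_sum (fun e => f (rot e).2 ^ 2) + (-1) * edge_sum (fun e => f e.2 ^ 2)
   + (-2) * pairing f f.
  rewrite /pairing -!edge_sum_scale -!edge_sum_add.
  by apply: edge_sum_ext => e _; rewrite /grad; ring.
by rewrite (edge_sum_rot (fun e => f e.2 ^ 2)); field.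
Qed.

Lemma Dir_ge0 (f : E -> R) : 0 <= Dir alpha f.
Proof.
rewrite Dir_edge_sum; apply: Rmult_le_pos; first lra.
by apply: sumR_ge0 => e _; apply/Rmult_le_pos/pow2_ge_0/cond_ge0.
Qed.

End EdgeSums.

Section Sector.
Variables (L N : nat) (alpha : R).
Hypothesis hL : (1 < L)%nat.
Hypothesis hWN : (0 < WN L N alpha)%R.
Local Open Scope R_scope.

Notation E := (cfg L N).
Notation edge := ('I_L * cfg L N)%type.
Notation is_edge := (@is_edge L N).
Notation rot := (@rot L N).
Notation grad := (@grad L N).

Definition orbit_sum (F : edge -> R) (e : edge) : R :=
  \big[Rplus/0]_(0 <= k < L) F (iter k rot e).

Lemma edge_sum_orbit (F : edge -> R) :
  edge_sum alpha (orbit_sum F) = INR L * edge_sum alpha F.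
Proof.
rewrite edge_sum_nat; under eq_bigr => k _ do rewrite (edge_sum_iter_rot alpha hL).
exact: sumR_const_nat.
Qed.

Lemma orbit_value (h : E -> R) (e : edge) k :
  h (iter k rot e).2 = h e.2 + \big[Rplus/0]_(0 <= j < k) grad h (iter j rot e).
Proof.
by rewrite (telescopeR (fun j => h (iter j rot e).2) k) /=; ring.
Qed.

Lemma orbit_closed (f : E -> R) (e : edge) : is_edge e -> orbit_sum (grad f) e = 0.
Proof.
move=> he; rewrite /orbit_sum (telescopeR (fun j => f (iter j rot e).2) L).
by rewrite iter_rot_period //=; ring.
Qed.

Lemma orbit_sector (f h : E -> R) (t : R) (e : edge) : 0 < t -> is_edge e ->
  - orbit_sum (fun e => grad f e * h e.2) e
  <= INR L * t / 2 * orbit_sum (fun e => grad f e ^ 2) e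
     + INR L / (2 * t) * orbit_sum (fun e => grad h e ^ 2) e.
Proof.
move=> ht he; rewrite /orbit_sum.
under eq_bigr => k _ do rewrite orbit_value Rmult_plus_distr_l.
rewrite big_split /= -big_distrl /= -/(orbit_sum (grad f) e) orbit_closed //.
have := triangular_young (fun k => grad f (iter k rot e))
                         (fun j => grad h (iter j rot e)) L ht; rewrite /=.
set A := bigop _ _ _; set B := bigop _ _ _; set C := bigop _ _ _.
have -> : INR L * t / 2 * B + INR L / (2 * t) * C = (INR L * t * B + INR L / t * C) / 2.
  by field; lra.
lra.
Qed.

Lemma sector (f h : E -> R) (t : R) : 0 < t ->
  - pairing alpha f h <= INR L * (t * Dir alpha f + Dir alpha h / t).
Proof.
move=> ht; have hL0 : 0 < INR L by apply/lt_0_INR/ltP/(ltn_trans _ hL).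
have orbit_Dir u :
    edge_sum alpha (orbit_sum (fun e => grad u e ^ 2)) = INR L * (2 * Dir alpha u).
  by rewrite edge_sum_orbit Dir_edge_sum; field.
have key : edge_sum alpha (fun e => -1 * orbit_sum (fun e => grad f e * h e.2) e)
    <= edge_sum alpha (fun e => INR L * t / 2 * orbit_sum (fun e => grad f e ^ 2) e
                            + INR L / (2 * t) * orbit_sum (fun e => grad h e ^ 2) e).
  by apply: (edge_sum_le hWN) => e he; have := orbit_sector f h ht he; lra.
rewrite edge_sum_add !edge_sum_scale !orbit_Dir edge_sum_orbit in key.
apply: (Rmult_le_reg_l _ _ _ hL0).
have -> : INR L * (INR L * (t * Dir alpha f + Dir alpha h / t)) =
    INR L * t / 2 * (INR L * (2 * Dir alpha f))
    + INR L / (2 * t) * (INR L * (2 * Dir alpha h)) by field; lra.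
by rewrite /pairing; lra.
Qed.

End Sector.

Section CapacityComparison.
Variables (L N : nat) (alpha : R).
Hypothesis hL : (1 < L)%nat.
Hypothesis hWN : (0 < WN L N alpha)%R.
Local Open Scope R_scope.

Notation E := (cfg L N).

(* If V is an equilibrium potential and F has the same boundary values,
   then L V = 0 wherever F - V may be nonzero, so D(V) = -<L V, F>_mu. *)
Lemma Dir_potential (A B : {set E}) (V F : E -> R) :
  eq_potential alpha A B V ->
  (forall eta, eta \in A -> F eta = 1) -> (forall eta, eta \in B -> F eta = 0) ->
  Dir alpha V = - pairing alpha V F.
Proof.
move=> [hVA [hVB hVgen]] hFA hFB.
have orth : pairing alpha V (fun eta => F eta - V eta) = 0.
  rewrite -gen_pairing big1 // => eta he.
  case: (boolP (eta \in A)) => ha; first by rewrite hFA // hVA //; ring.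
  case: (boolP (eta \in B)) => hb; first by rewrite hFB // hVB //; ring.
  by rewrite hVgen //; ring.
have expand : pairing alpha V (fun eta => F eta - V eta)
             = pairing alpha V F + -1 * pairing alpha V V.
  by rewrite /pairing -edge_sum_scale -edge_sum_add; apply: edge_sum_ext => e _; ring.
by rewrite Dir_pairing //; lra.
Qed.

(* The main estimate: D(V) <= 4 L^2 D(F) for every admissible F, by the
   sector inequality with t = 1/(2L). *)
Lemma Dir_potential_le (A B : {set E}) (V F : E -> R) :
  eq_potential alpha A B V ->
  (forall eta, eta \in A -> F eta = 1) -> (forall eta, eta \in B -> F eta = 0) ->
  Dir alpha V <= 4 * INR L ^ 2 * Dir alpha F.
Proof.
move=> hV hFA hFB; have hL0 : 0 < INR L by apply/lt_0_INR/ltP/(ltn_trans _ hL).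
have ht : 0 < / (2 * INR L) by apply: Rinv_0_lt_compat; lra.
have := sector hL hWN V F ht; rewrite -(Dir_potential hV hFA hFB).
have -> : INR L * (/ (2 * INR L) * Dir alpha V + Dir alpha F / / (2 * INR L)) =
   Dir alpha V / 2 + 2 * INR L ^ 2 * Dir alpha F by field; lra.
lra.
Qed.

End CapacityComparison.

Section Connectivity.
Variables (L N : nat).
Hypothesis hL : (1 < L)%nat.

Notation E := (cfg L N).
Notation rot := (@rot L N).

Lemma last_lt : (L.-1 < L)%N.
Proof. by rewrite ltn_predL; exact: ltnW hL. Qed.

Definition last_site : 'I_L := Ordinal last_lt.

Definition all_last : E := [ffun z => if z == last_site then inord N else ord0].

Definition dist_last (eta : E) : nat :=
  (\sum_(z < L) (eta z : nat) * (L.-1 - z))%N.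

Lemma dist_last_rot (eta : E) (z : 'I_L) : inEN eta -> (eta z : nat) != 0%N ->
  z != last_site -> (dist_last (rot (z, eta)).2 < dist_last eta)%N.
Proof.
move=> he hz hzl; have hzv : (z < L.-1)%N.
  have : (z : nat) != L.-1 by apply: contraNneq hzl => h; apply/eqP/val_inj.
  by move=> *; ord_lia.
have hs : (succ z : nat) = z.+1 by rewrite /= modn_small //; ord_lia.
have moved w : (Defs.sigma z (succ z) eta w + (w == z) = eta w + (w == succ z))%N.
  rewrite sigmaE //; case: (eqVneq w z) => [->|wz]; last by rewrite subn0 addn0.
  by rewrite [z == _]eq_sym (negbTE (succ_neq z hL)) /=; ord_lia.
have pick (y : 'I_L) : (\sum_(w < L) (w == y) * (L.-1 - w) = L.-1 - y)%N.
  by rewrite (bigD1 y) //= eqxx big1 ?mul1n ?addn0 // => i /negbTE ->.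
have : (dist_last (rot (z, eta)).2 + (L.-1 - z) = dist_last eta + (L.-1 - succ z))%N.
  rewrite /dist_last -[in LHS](pick z) -[in RHS](pick (succ z)) -!big_split /=.
  by apply: eq_bigr => w _; rewrite -!mulnDl moved.
by rewrite hs; ord_lia.
Qed.

Lemma all_last_or_movable (eta : E) : inEN eta ->
  eta = all_last \/ exists2 z, z != last_site & (eta z : nat) != 0%N.
Proof.
move=> /eqP he; case: (pickP (fun z => (z != last_site) && ((eta z : nat) != 0%N))).
  by move=> z /andP [hz hx]; right; exists z.
move=> empty; left; have h0 z : z != last_site -> (eta z : nat) = 0%N.
  by move=> hz; have := empty z; rewrite hz /= => /negbFE /eqP.
apply/ffunP => w; apply: val_inj; rewrite ffunE.
case: (eqVneq w last_site) => [->|wl]; last exact: h0.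
by rewrite /= inordK //; move: he; rewrite (bigD1 last_site) //= big1 ?addn0.
Qed.

Lemma jump_invariant_const (u : E -> R) :
  (forall e, is_edge e -> u (rot e).2 = u e.2) ->
  forall eta, inEN eta -> u eta = u all_last.
Proof.
move=> hu; suff H k eta : (dist_last eta <= k)%N -> inEN eta -> u eta = u all_last.
  by move=> eta; exact: H (dist_last eta) eta (leqnn _).
elim: k eta => [|k IH] eta hd he; case: (all_last_or_movable he) => [-> //|[z hz hx]].
  by have := dist_last_rot he hx hz; ord_lia.
have edge_z : is_edge (z, eta) by rewrite /is_edge he.
rewrite -(hu _ edge_z); apply: IH; last by case/andP: (rot_edge edge_z).
by rewrite -ltnS; exact: leq_trans (dist_last_rot he hx hz) hd.
Qed.

End Connectivity.

Section DirichletProblem.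
Variables (L N : nat) (alpha : R).
Hypothesis hL : (1 < L)%nat.
Hypothesis hWN : (0 < WN L N alpha)%R.
Variables (A B : {set cfg L N}).
Local Open Scope R_scope.

Notation E := (cfg L N).

Lemma Dir_eq0_const (u : E -> R) : Dir alpha u = 0 ->
  forall eta, inEN eta -> u eta = u (@all_last L N hL).
Proof.
rewrite Dir_edge_sum => hD; apply: jump_invariant_const => e he.
have hsum : edge_sum alpha (fun e => grad u e ^ 2) = 0 by lra.
have := sumR_eq0 (fun f _ => Rmult_le_pos _ _ (cond_ge0 hWN f) (pow2_ge_0 _)) hsum he.
have := cond_pos hWN he; rewrite /grad /= Rmult_1_r => hc /Rmult_integral [|/Rmult_integral []]; lra.
Qed.

Definition interior (eta : E) : bool := [&& inEN eta, eta \notin A & eta \notin B].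

Definition dirichlet_op (u : E -> R) (eta : E) : R :=
  if interior eta then gen alpha u eta else u eta.

(* Uniqueness for the Dirichlet problem: if dirichlet_op u = 0 then
   <L u, u>_mu = 0, so D(u) = 0, so u is constant on E_N, and it vanishes on
   B (nonempty, inside E_N). *)
Lemma dirichlet_op_inj (u : E -> R) (beta : E) : beta \in B -> inEN beta ->
  (forall eta, dirichlet_op u eta = 0) -> forall eta, u eta = 0.
Proof.
move=> hbB hbE hK.
have off eta : ~~ interior eta -> u eta = 0.
  by move=> hi; have := hK eta; rewrite /dirichlet_op (negbTE hi).
have harmonic eta : interior eta -> gen alpha u eta = 0.
  by move=> hi; have := hK eta; rewrite /dirichlet_op hi.
have hD : Dir alpha u = 0.
  rewrite (Dir_pairing _ hL) -gen_pairing big1 ?Ropp_0 // => eta _.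
  case: (boolP (interior eta)) => hi; first by rewrite harmonic //; ring.
  by rewrite off //; ring.
have ub : u beta = 0 by apply: off; rewrite /interior hbB !andbF.
move=> eta; case: (boolP (inEN eta)) => he; last by apply: off; rewrite /interior (negbTE he).
by rewrite (Dir_eq0_const hD he) -(Dir_eq0_const hD hbE).
Qed.

Definition indicator (z : E) : E -> R := fun w => if w == z then 1 else 0.

Lemma sum_indicator (u : E -> R) (w : E) :
  \big[Rplus/0]_(z : E) (u z * indicator z w) = u w.
Proof.
rewrite (bigD1 w) //= /indicator eqxx big1 => [|z /negbTE]; first by ring.
by rewrite eq_sym => ->; ring.
Qed.

Lemma dirichlet_op_linear (u : E -> R) (eta : E) :
  dirichlet_op u eta = \big[Rplus/0]_(z : E) (u z * dirichlet_op (indicator z) eta).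
Proof.
rewrite /dirichlet_op; case: (interior eta); last by rewrite sum_indicator.
rewrite /gen /Rsum; under [RHS]eq_bigr => z _ do rewrite big_distrr.
rewrite exchange_big /=; apply: eq_bigr => x _.
set eta' := Defs.sigma x (succ x) eta.
rewrite -[u eta'](sum_indicator u) -[u eta](sum_indicator u).
rewrite Rmult_minus_distr_l /Rminus Ropp_mult_distr_l !big_distrr -big_split /=.
by apply: eq_bigr => z _; ring.
Qed.

Local Open Scope ring_scope.

Definition dirichlet_mx : 'M[R]_#|E| :=
  \matrix_(i, j) dirichlet_op (indicator (enum_val i)) (enum_val j).

Definition fun_of_row (v : 'rV[R]_#|E|) : E -> R := fun z => v ord0 (enum_rank z).

Lemma dirichlet_mxE (v : 'rV[R]_#|E|) j :
  (v *m dirichlet_mx) ord0 j = dirichlet_op (fun_of_row v) (enum_val j).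
Proof.
rewrite dirichlet_op_linear mxE.
rewrite (reindex_onto enum_rank enum_val) => [|i _]; last by rewrite enum_valK.
apply: eq_big => [z | z _]; first by rewrite enum_rankK eqxx.
by rewrite mxE enum_rankK.
Qed.

Lemma dirichlet_mx_unit (beta : E) : beta \in B -> inEN beta -> dirichlet_mx \in unitmx.
Proof.
move=> hb he; rewrite -row_free_unit -kermx_eq0; apply/eqP/row_matrixP => i.
rewrite row0; set w := row i _.
have hw : w *m dirichlet_mx = 0 by rewrite /w -row_mul mulmx_ker row0.
have vanish eta : dirichlet_op (fun_of_row w) eta = 0.
  by rewrite -(enum_rankK eta) -dirichlet_mxE hw mxE.
clearbody w; apply/rowP => k; rewrite mxE.
by have := dirichlet_op_inj hb he vanish (enum_val k); rewrite /fun_of_row enum_valK.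
Qed.

(* The equilibrium potential V_{A,B} exists: solve dirichlet_op V = 1_A. *)
Lemma exists_potential (beta : E) : beta \in B -> inEN beta ->
  [disjoint A & B] -> exists V, eq_potential alpha A B V.
Proof.
move=> hb he hAB; pose b : 'rV[R]_#|E| := \row_j (if enum_val j \in A then 1 else 0).
pose v := b *m invmx dirichlet_mx.
have solves eta : dirichlet_op (fun_of_row v) eta = if eta \in A then 1 else 0.
  rewrite -(enum_rankK eta) -dirichlet_mxE mulmxKV ?(dirichlet_mx_unit hb he) //.
  by rewrite mxE.
exists (fun_of_row v); split; [|split].
- by move=> eta ha; have := solves eta; rewrite ha /dirichlet_op /interior ha /= andbF.
- move=> eta hbB; have := solves eta; rewrite (disjointFl hAB hbB).
  by rewrite /dirichlet_op /interior hbB /= !andbF.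
- move=> eta hE hnA hnB; have := solves eta.
  by rewrite (negbTE hnA) /dirichlet_op /interior hE hnA hnB.
Qed.

End DirichletProblem.

Section Infimum.
Local Open Scope R_scope.

Lemma is_inf_exists (S : R -> Prop) (x0 m : R) :
  S x0 -> (forall x, S x -> m <= x) -> exists c, is_inf S c.
Proof.
move=> hx0 hm; pose S' x := S (- x).
have bounded : bound S' by exists (- m) => x /hm; lra.
have inhabited : exists x, S' x by exists (- x0); rewrite /S' Ropp_involutive.
have [sup [ub least]] := completeness S' bounded inhabited.
exists (- sup); split=> [x hx | c' hc'].
- by have := ub (- x); rewrite /S' Ropp_involutive => /(_ hx); lra.
- have : sup <= - c' by apply: least => x /hc'; lra.
  lra.
Qed.

Lemma le_scale_inf (S : R -> Prop) (K c cs : R) : 0 < K ->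
  (forall d, S d -> c <= K * d) -> is_inf S cs -> c <= K * cs.
Proof.
move=> hK hc [_ greatest].
have -> : c = K * (c / K) by field; lra.
apply: Rmult_le_compat_l; first lra.
apply: greatest => d /hc hd; apply: (Rmult_le_reg_l K) => //.
by have -> : K * (c / K) = c by field; lra.
Qed.

End Infimum.

Theorem lemma3p2 (L N : nat) (alpha : R)
  (hL : (2 <= L)%N) (hN : (1 <= N)%N) (halpha : (0 < alpha)%R)
  (A B : {set cfg L N})
  (hA : forall eta, eta \in A -> inEN eta)
  (hB : forall eta, eta \in B -> inEN eta)
  (hA0 : A != set0) (hB0 : B != set0)
  (hAB : [disjoint A & B]) :
  (exists V, eq_potential alpha A B V) /\
  (exists cs, is_Caps alpha A B cs) /\
  (forall c cs, is_Cap alpha A B c -> is_Caps alpha A B cs ->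
     (cs <= c)%R /\ (c <= 4 * INR L ^ 2 * cs)%R).
Proof.
have [beta hbeta] := set0Pn _ hB0; have hbeta_E := hB _ hbeta.
have hWN := WN_pos alpha hbeta_E.
have potential := exists_potential hL hWN hbeta hbeta_E hAB.
split; first exact: potential.
have [V [hVA [hVB _]]] := potential.
split.
  apply: (is_inf_exists (x0 := Dir alpha V) (m := 0%R)) => [|d [F [_ [_ ->]]]].
    by exists V.
  exact: Dir_ge0.
move=> c cs [V' [hV' ->]] hcs; split.
  by case: hcs => [lower _]; apply: lower; exists V'; case: hV' => ? [? _].
apply: le_scale_inf hcs => [|d [F [hFA [hFB ->]]]]; last exact: Dir_potential_le hV' hFA hFB.
by have := lt_0_INR L (ltP (ltn_trans (ltn0Sn 0) hL)); nra.
Qed.
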